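(* Let $\mathcal H$ be a separable complex Hilbert space, $A\in L(\mathcal H)^+$ and $B\in L(\mathcal H)$ with closed range. Then $B$ admits an $A$-inverse if and only if the pair $(A,R(B))$ is compatible.
   Context: $\|z\|_A=\langle Az,z\rangle^{1/2}$. $G\in L(\mathcal H)$ is an $A$-inverse of $B$ if for every $y\in\mathcal H$, $\|y-BGy\|_A\le\|y-Bx\|_A$ for all $x\in\mathcal H$. $(A,\mathcal S)$ is compatible if there exists $Q\in L(\mathcal H)$ with $Q^2=Q$, $R(Q)=\mathcal S$, $AQ=Q^*A$. *)

From HB Require Import structures.
From mathcomp Require Import all_boot all_order all_algebra.
From mathcomp Require Import reals.
From mathcomp Require Export complex.
Set Implicit Arguments. Unset Strict Implicit. Unset Printing Implicit Defensive.
Import Order.TTheory GRing.Theory Num.Theory.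
Local Open Scope ring_scope.

Section Hilbert.
Variables (R : realType) (V : lmodType R[i]) (ip : V -> V -> R[i]).

Definition inner_product_axioms : Prop :=
  [/\ (forall (a : R[i]) (x y z : V), ip (a *: x + y) z = a * ip x z + ip y z),
      (forall x y : V, ip x y = ((ip y x)^*)%C),
      (forall x : V, 0 <= ip x x) &
      (forall x : V, ip x x = 0 -> x = 0)].

Definition hnorm (x : V) : R := Num.sqrt (complex.Re (ip x x)).

Definition hconverges (u : nat -> V) (l : V) : Prop :=
  forall e : R, 0 < e -> exists N : nat, forall n, (N <= n)%N -> hnorm (u n - l) < e.

Definition hcauchy (u : nat -> V) : Prop :=
  forall e : R, 0 < e -> exists N : nat, forall m n, (N <= m)%N -> (N <= n)%N ->
    hnorm (u m - u n) < e.

Definition is_hilbert : Prop :=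
  inner_product_axioms /\ forall u, hcauchy u -> exists l, hconverges u l.

Definition hseparable : Prop :=
  exists d : nat -> V, forall (x : V) (e : R), 0 < e -> exists n, hnorm (x - d n) < e.

Definition bounded_op (T : V -> V) : Prop :=
  (forall (a : R[i]) (x y : V), T (a *: x + y) = a *: T x + T y) /\
  exists M : R, forall x, hnorm (T x) <= M * hnorm x.

Definition positive_op (A : V -> V) : Prop :=
  bounded_op A /\ forall x, 0 <= ip (A x) x.

Definition range (T : V -> V) : V -> Prop := fun y => exists x, T x = y.

Definition closed_range (T : V -> V) : Prop :=
  forall (u : nat -> V) (y : V), hconverges (fun n => T (u n)) y -> range T y.

Definition is_adjoint (T Ts : V -> V) : Prop :=
  forall x y, ip (T x) y = ip x (Ts y).

Definition Anorm (A : V -> V) (z : V) : R := Num.sqrt (complex.Re (ip (A z) z)).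

Definition is_A_inverse (A B G : V -> V) : Prop :=
  bounded_op G /\
  forall y x, Anorm A (y - B (G y)) <= Anorm A (y - B x).

Definition compatible (A : V -> V) (S : V -> Prop) : Prop :=
  exists Q : V -> V, bounded_op Q /\
    (forall x, Q (Q x) = Q x) /\
    (forall y, range Q y <-> S y) /\
    exists Qs : V -> V, bounded_op Qs /\ is_adjoint Q Qs /\
      forall x, A (Q x) = Qs (A x).

End Hilbert.

From HB Require Import structures.
From mathcomp Require Import all_boot all_order all_algebra.
From mathcomp Require Import reals complex.
From mathcomp Require classical_sets.
From mathcomp Require Import lra ring.
From Stdlib Require Import IndefiniteDescription Classical.
Set Implicit Arguments. Unset Strict Implicit. Unset Printing Implicit Defensive.
Import Order.TTheory GRing.Theory Num.Theory.
Local Open Scope ring_scope.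

(* If [G] is an A-inverse of [B], the first-order condition of the least-squares
   problem says that [A (y - B G y)] is orthogonal to [R(B)].  Adding to [B G]
   the orthogonal projection of the residual onto the closed subspace
   [R(B) ∩ N(A)] yields an idempotent [Q] with range [R(B)] such that
   [A (1 - Q)] is orthogonal to [R(B)], which is the same as [A Q = Q^* A].
   Conversely, for such a [Q] the vector [Q y] is a best [A]-approximation of
   [y] in [R(B)]; as [R(B)] is closed, the open mapping theorem (derived from
   Baire's theorem) writes [Q = B G] with [G] bounded, and [G] is made linear by
   removing its component in [N(B)]. *)

Local Notation Re := complex.Re.
Local Notation Im := complex.Im.

Section ComplexParts.
Variable R : rcfType.
Implicit Types (x y : R[i]) (r : R).

Lemma Re_add x y : Re (x + y) = Re x + Re y.
Proof. by case: x => a b; case: y => c d. Qed.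
Lemma Im_add x y : Im (x + y) = Im x + Im y.
Proof. by case: x => a b; case: y => c d. Qed.
Lemma Re_opp x : Re (- x) = - Re x. Proof. by case: x. Qed.
Lemma Re_mul x y : Re (x * y) = Re x * Re y - Im x * Im y.
Proof. by case: x => a b; case: y => c d. Qed.
Lemma Im_mul x y : Im (x * y) = Re x * Im y + Im x * Re y.
Proof. by case: x => a b; case: y => c d. Qed.
Lemma Re_conj x : Re (x^*)%C = Re x. Proof. by case: x. Qed.
Lemma Im_conj x : Im (x^*)%C = - Im x. Proof. by case: x. Qed.

Lemma complex_ext x y : Re x = Re y -> Im x = Im y -> x = y.
Proof. by case: x => a b; case: y => c d /= -> ->. Qed.

Lemma ge0_Re x : 0 <= x -> 0 <= Re x.
Proof. by rewrite lecE => /andP[]. Qed.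

Lemma ge0_complex_real x : 0 <= x -> x = (Re x)%:C%C.
Proof. by move=> /ger0_Im x0; apply: complex_ext. Qed.

End ComplexParts.

Section InnerProductSpace.
Variables (R : realType) (V : lmodType R[i]) (ip : V -> V -> R[i]).
Hypothesis hip : inner_product_axioms ip.
Implicit Types (x y z : V) (a : R[i]).

Local Notation hn := (hnorm ip).

Lemma ipDl x y z : ip (x + y) z = ip x z + ip y z.
Proof. by case: hip => H _ _ _; rewrite -[x]scale1r H mul1r scale1r. Qed.
Lemma ip0l z : ip 0 z = 0.
Proof. by apply: (addrI (ip 0 z)); rewrite -ipDl !addr0. Qed.
Lemma ipZl a x z : ip (a *: x) z = a * ip x z.
Proof. by case: hip => H _ _ _; rewrite -[a *: x]addr0 H ip0l addr0. Qed.
Lemma ipNl x z : ip (- x) z = - ip x z.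
Proof. by rewrite -scaleN1r ipZl mulN1r. Qed.
Lemma ipBl x y z : ip (x - y) z = ip x z - ip y z.
Proof. by rewrite ipDl ipNl. Qed.

Lemma ipC x y : ip x y = ((ip y x)^*)%C.
Proof. by case: hip. Qed.

Lemma ipDr x y z : ip z (x + y) = ip z x + ip z y.
Proof. by rewrite ipC ipDl rmorphD /= -!ipC. Qed.
Lemma ip0r z : ip z 0 = 0.
Proof. by rewrite ipC ip0l conjc0. Qed.
Lemma ipZr a x z : ip z (a *: x) = (a^*)%C * ip z x.
Proof. by rewrite ipC ipZl rmorphM /= -ipC. Qed.
Lemma ipNr x z : ip z (- x) = - ip z x.
Proof. by rewrite ipC ipNl rmorphN /= -ipC. Qed.

Lemma Re_ipC x y : Re (ip x y) = Re (ip y x).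
Proof. by rewrite ipC Re_conj. Qed.

Lemma Im_ipC x y : Im (ip x y) = - Im (ip y x).
Proof. by rewrite ipC Im_conj. Qed.

Lemma Re_ipZr_real (t : R) x y : Re (ip x (t%:C%C *: y)) = t * Re (ip x y).
Proof. by rewrite ipZr conjc_real Re_mul /=; lra. Qed.

Lemma Re_ipZr_i x y : Re (ip x ('i%C *: y)) = Im (ip x y).
Proof. by rewrite ipZr Re_mul /=; lra. Qed.

Definition hnorm2 x := Re (ip x x).

Lemma hnorm2_ge0 x : 0 <= hnorm2 x.
Proof. by case: hip => _ _ H _; apply: ge0_Re. Qed.
Lemma ip_self x : ip x x = (hnorm2 x)%:C%C.
Proof. by case: hip => _ _ H _; apply: ge0_complex_real. Qed.
Lemma hnorm2_eq0 x : hnorm2 x = 0 -> x = 0.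
Proof. by case: hip => _ _ _ H h; apply: H; rewrite ip_self h. Qed.

Lemma eq_Re_ipl x y : (forall z, Re (ip x z) = Re (ip y z)) -> x = y.
Proof.
move=> h; apply/eqP; rewrite -subr_eq0; apply/eqP/hnorm2_eq0.
by rewrite /hnorm2 ipBl Re_add Re_opp h subrr.
Qed.

Lemma eq_ipr x y : (forall z, ip z x = ip z y) -> x = y.
Proof. by move=> h; apply: eq_Re_ipl => z; rewrite Re_ipC [RHS]Re_ipC h. Qed.

Lemma hnorm2D x y : hnorm2 (x + y) = hnorm2 x + 2 * Re (ip x y) + hnorm2 y.
Proof. by rewrite /hnorm2 ipDl !ipDr !Re_add (Re_ipC y x); lra. Qed.
Lemma hnorm2N x : hnorm2 (- x) = hnorm2 x.
Proof. by rewrite /hnorm2 ipNl ipNr opprK. Qed.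
Lemma hnorm2B x y : hnorm2 (x - y) = hnorm2 x - 2 * Re (ip x y) + hnorm2 y.
Proof. by rewrite hnorm2D hnorm2N ipNr Re_opp; lra. Qed.
Lemma hnorm2Z a x : hnorm2 (a *: x) = (Re a ^+ 2 + Im a ^+ 2) * hnorm2 x.
Proof. by rewrite /hnorm2 ipZl ipZr ip_self !Re_mul !Im_mul Re_conj Im_conj /=; lra. Qed.

Lemma hnorm2_double x : hnorm2 (x + x) = 4 * hnorm2 x.
Proof. by rewrite hnorm2D /hnorm2; lra. Qed.
Lemma parallelogram x y :
  hnorm2 (x + y) + hnorm2 (x - y) = 2 * hnorm2 x + 2 * hnorm2 y.
Proof. by rewrite hnorm2D hnorm2B; lra. Qed.

Lemma sqr_hnorm x : hn x ^+ 2 = hnorm2 x.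
Proof. by rewrite /hnorm sqr_sqrtr // hnorm2_ge0. Qed.
Lemma hnorm_ge0 x : 0 <= hn x.
Proof. exact: sqrtr_ge0. Qed.
Lemma hnorm_eq0 x : hn x = 0 -> x = 0.
Proof. by move=> h; apply: hnorm2_eq0; rewrite -sqr_hnorm h expr0n. Qed.
Lemma hnorm0 : hn 0 = 0.
Proof. by rewrite /hnorm ip0l sqrtr0. Qed.
Lemma hnorm_opp x : hn (- x) = hn x.
Proof. by rewrite /hnorm -!/(hnorm2 _) hnorm2N. Qed.
Lemma hnorm_distC x y : hn (x - y) = hn (y - x).
Proof. by rewrite -hnorm_opp opprB. Qed.
Lemma hnorm_scale a x : hn (a *: x) = Num.sqrt (Re a ^+ 2 + Im a ^+ 2) * hn x.
Proof. by rewrite /hnorm -!/(hnorm2 _) hnorm2Z sqrtrM // addr_ge0 // sqr_ge0. Qed.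
Lemma hnorm_scale_real (r : R) x : hn (r%:C%C *: x) = `|r| * hn x.
Proof. by rewrite hnorm_scale /= expr0n addr0 sqrtr_sqr. Qed.

Lemma ler_hnorm x y : (hn x <= hn y) = (hnorm2 x <= hnorm2 y).
Proof. by rewrite /hnorm ler_sqrt // hnorm2_ge0. Qed.

Lemma hnorm_le_sqr x c : 0 <= c -> (hn x <= c) = (hnorm2 x <= c ^+ 2).
Proof. by move=> c0; rewrite -sqr_hnorm ler_pXn2r ?nnegrE ?hnorm_ge0. Qed.

Lemma CauchySchwarz x y : Re (ip x y) <= hn x * hn y.
Proof.
have [y0|yn0] := eqVneq (hnorm2 y) 0.
  by rewrite (hnorm2_eq0 y0) ip0r hnorm0 mulr0.
have yp : 0 < hnorm2 y by rewrite lt0r yn0 hnorm2_ge0.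
have h := hnorm2_ge0 ((hnorm2 y)%:C%C *: x - (Re (ip x y))%:C%C *: y).
rewrite hnorm2B !hnorm2Z ipZl Re_mul /= mul0r subr0 Re_ipZr_real !expr0n !addr0 in h.
have sq : Re (ip x y) ^+ 2 <= (hn x * hn y) ^+ 2.
  by rewrite exprMn !sqr_hnorm; nra.
have := mulr_ge0 (hnorm_ge0 x) (hnorm_ge0 y); nra.
Qed.

Lemma hnorm_triangle x y : hn (x + y) <= hn x + hn y.
Proof.
rewrite -(ler_pXn2r (_ : (0 < 2)%N)) ?nnegrE ?addr_ge0 ?hnorm_ge0 //.
by rewrite sqr_hnorm hnorm2D sqrrD !sqr_hnorm; have := CauchySchwarz x y; lra.
Qed.
Lemma hnorm_dist_triangle x y z : hn (x - z) <= hn (x - y) + hn (y - z).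
Proof. by rewrite (le_trans _ (hnorm_triangle _ _)) // addrA subrK. Qed.

End InnerProductSpace.

Section RealFacts.
Variable R : realType.

Definition halfpow (n : nat) : R := (2 ^+ n)^-1.

Lemma halfpow_gt0 n : 0 < halfpow n.
Proof. by rewrite invr_gt0 exprn_gt0. Qed.
Lemma halfpow0 : halfpow 0 = 1.
Proof. by rewrite /halfpow expr0 invr1. Qed.
Lemma halfpowS n : halfpow n.+1 = halfpow n / 2.
Proof. by rewrite /halfpow exprS invfM mulrC. Qed.
Lemma halfpow_le1 n : halfpow n <= 1.
Proof. by rewrite invf_le1 ?exprn_gt0 // exprn_ege1 // ler1n. Qed.
Lemma halfpow_le m n : (m <= n)%N -> halfpow n <= halfpow m.
Proof. by move=> mn; rewrite lef_pV2 ?posrE ?exprn_gt0 // ler_eXn2l // ltr1n. Qed.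

Lemma halfpow_small (e : R) : 0 < e -> exists N, forall n, (N <= n)%N -> halfpow n < e.
Proof.
move=> e0; exists (Num.truncn e^-1) => n Nn.
apply: le_lt_trans (halfpow_le Nn) _.
rewrite /halfpow -[e]invrK ltf_pV2 ?posrE ?invr_gt0 ?exprn_gt0 //.
by apply: lt_le_trans (truncnS_gt _) _; rewrite -natrX ler_nat invrK ltn_expl.
Qed.

Lemma quadratic_ge0_lin_eq0 (a c : R) : 0 <= c ->
  (forall t, 0 <= - (2 * t * a) + t ^+ 2 * c) -> a = 0.
Proof.
move=> c0 h; pose s := (c + 1)^-1.
have s0 : 0 < s by rewrite invr_gt0; lra.
have sc : s * c < 1.
  have : s * (c + 1) = 1 by rewrite mulVf //; lra.
  nra.
have H : 0 <= a ^+ 2 * s * (- 2 + s * c).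
  by have := h (a * s); congr (0 <= _); ring.
have : a ^+ 2 * s <= 0 by move: H; set x := a ^+ 2 * s; nra.
rewrite pmulr_lle0 // => a2; apply/eqP.
by rewrite -sqrf_eq0 eq_le a2 sqr_ge0.
Qed.

Lemma affine_ge0_slope_eq0 (a b : R) : (forall t, 0 <= b - 2 * t * a) -> a = 0.
Proof.
move=> h; have [//|a0] := eqVneq a 0; exfalso.
have := h ((`|b| + 1) / a ^+ 2 * a).
have -> : 2 * ((`|b| + 1) / a ^+ 2 * a) * a = 2 * (`|b| + 1) by field.
have := ler_norm b; have := normr_ge0 b; lra.
Qed.

End RealFacts.

Section Geometry.
Variables (R : realType) (V : lmodType R[i]) (ip : V -> V -> R[i]).
Hypothesis hip : inner_product_axioms ip.
Implicit Types (K : V -> Prop) (u v x y : V).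

Local Notation hn := (hnorm ip).
Local Notation hnorm2 := (hnorm2 ip).

Definition hclosed K :=
  forall y, (forall e, 0 < e -> exists z, K z /\ hn (z - y) < e) -> K y.
Definition subspace K := K 0 /\ forall a x y, K x -> K y -> K (a *: x + y).
Definition linop (T : V -> V) := forall a x y, T (a *: x + y) = a *: T x + T y.
Definition orth K v := forall k, K k -> ip v k = 0.

Section LinearOperator.
Variable T : V -> V.
Hypothesis hT : linop T.
Lemma linop0 : T 0 = 0.
Proof. by apply: (addrI (T 0)); rewrite -{1}(scale1r (T 0)) -hT scale1r !addr0. Qed.
Lemma linopD x y : T (x + y) = T x + T y.
Proof. by rewrite -{1}[x]scale1r hT scale1r. Qed.
Lemma linopZ a x : T (a *: x) = a *: T x.
Proof. by rewrite -[a *: x]addr0 hT linop0 addr0. Qed.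
Lemma linopN x : T (- x) = - T x.
Proof. by rewrite -scaleN1r linopZ scaleN1r. Qed.
Lemma linopB x y : T (x - y) = T x - T y.
Proof. by rewrite linopD linopN. Qed.
End LinearOperator.

Lemma bounded_op_gt0 T :
  bounded_op ip T -> exists M, 0 < M /\ forall x, hn (T x) <= M * hn x.
Proof.
case=> _ [M hM]; exists (`|M| + 1); split; first by have := normr_ge0 M; lra.
move=> x; apply: le_trans (hM x) _; apply: ler_wpM2r; first exact: hnorm_ge0.
by have := ler_norm M; lra.
Qed.

Lemma bounded_op_comp S T : bounded_op ip S -> bounded_op ip T -> bounded_op ip (S \o T).
Proof.
move=> hS hT; have [Sl _] := hS; have [Tl _] := hT.
have [MS [MS0 hMS]] := bounded_op_gt0 hS; have [MT [_ hMT]] := bounded_op_gt0 hT.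
split=> [a x y|]; first by rewrite /= Tl Sl.
by exists (MS * MT) => x; apply: le_trans (hMS _) _; rewrite -mulrA ler_pM2l.
Qed.

(* the shape of the A-selfadjoint projection built from an A-inverse *)
Lemma bounded_op_correction T P : bounded_op ip T -> linop P ->
  (forall u, hn (P u) <= hn u) -> bounded_op ip (fun y => T y + P (y - T y)).
Proof.
move=> hT Pl hP; have [Tl _] := hT; have [M [M0 hM]] := bounded_op_gt0 hT.
split=> [a y1 y2|].
  rewrite Tl; have -> : a *: y1 + y2 - (a *: T y1 + T y2) =
                        a *: (y1 - T y1) + (y2 - T y2) by rewrite scalerBr opprD addrACA.
  by rewrite Pl scalerDr addrACA.
exists (2 * M + 1) => y; apply: le_trans (hnorm_triangle hip _ _) _.
have := hP (y - T y); have := hnorm_triangle hip y (- T y); rewrite hnorm_opp //.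
by have := hM y; have := hnorm_ge0 ip y; lra.
Qed.

Section SubspaceTheory.
Variable K : V -> Prop.
Hypothesis hK : subspace K.
Lemma subspace0 : K 0. Proof. by case: hK. Qed.
Lemma subspaceD x y : K x -> K y -> K (x + y).
Proof. by case: hK => _ h kx ky; rewrite -[x]scale1r; apply: h. Qed.
Lemma subspaceZ a x : K x -> K (a *: x).
Proof. by case: hK => K0 h kx; rewrite -[_ *: _]addr0; apply: h. Qed.
Lemma subspaceB x y : K x -> K y -> K (x - y).
Proof. by move=> kx ky; rewrite -scaleN1r; apply: subspaceD => //; apply: subspaceZ. Qed.

Lemma orth_Re v : (forall k, K k -> Re (ip v k) = 0) -> orth K v.
Proof.
move=> h k kk; apply: complex_ext; first by rewrite h.
by rewrite -(Re_ipZr_i hip) h //; apply: subspaceZ.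
Qed.

Lemma min_dist_orth u p : K p -> (forall k, K k -> hn (u - p) <= hn (u - k)) ->
  orth K (u - p).
Proof.
move=> Kp hmin; apply: orth_Re => k Kk.
apply: (@quadratic_ge0_lin_eq0 _ _ (hnorm2 k)); first exact: hnorm2_ge0.
move=> t; have := hmin _ (subspaceD Kp (subspaceZ (t%:C%C) Kk)).
rewrite opprD addrA ler_hnorm // [in X in _ <= X]hnorm2B // hnorm2Z //.
by rewrite Re_ipZr_real //= expr0n addr0; lra.
Qed.

(* parallelogram law at the midpoint of [k1] and [k2], which lies in [K] *)
Lemma near_min_dist_close u d a k1 k2 : (forall k, K k -> d <= hn (u - k)) ->
  0 <= d -> K k1 -> K k2 -> hn (u - k1) <= d + a -> hn (u - k2) <= d + a ->
  hnorm2 (k1 - k2) <= 4 * a * (2 * d + a).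
Proof.
move=> hd d0 K1 K2 h1 h2.
pose w := (2 : R[i])^-1 *: (k1 + k2).
have hw := hd w (subspaceZ _ (subspaceD K1 K2)).
have ww : w + w = k1 + k2.
  have h2inv : (2 : R[i])^-1 + 2^-1 = 1 by field.
  by rewrite -scalerDl h2inv scale1r.
have := parallelogram hip (u - k2) (u - k1).
have -> : u - k2 - (u - k1) = k1 - k2 by rewrite opprB addrC addrA subrK.
rewrite addrACA -opprD [k2 + _]addrC -ww opprD addrACA hnorm2_double // -!sqr_hnorm //.
have sq_le (x y : R) : 0 <= x -> x <= y -> x ^+ 2 <= y ^+ 2.
  by move=> x0 xy; rewrite lerXn2r ?nnegrE // (le_trans x0).
have := sq_le _ _ (hnorm_ge0 _ _) h1; have := sq_le _ _ (hnorm_ge0 _ _) h2.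
have := sq_le _ _ d0 hw; rewrite sqr_hnorm //; lra.
Qed.

Lemma orth_decomp_uniq u p p' : K p -> K p' -> orth K (u - p) -> orth K (u - p') ->
  p = p'.
Proof.
move=> Kp Kp' h h'; apply/eqP; rewrite -subr_eq0; apply/eqP/(hnorm2_eq0 hip).
have e : p - p' = (u - p') - (u - p) by rewrite opprB [RHS]addrC addrA subrK.
by rewrite /hnorm2 {1}e ipBl // h' ?h ?subrr //; apply: subspaceB.
Qed.

End SubspaceTheory.

Lemma subspaceI K1 K2 : subspace K1 -> subspace K2 -> subspace (fun x => K1 x /\ K2 x).
Proof.
case=> K10 K1l [K20 K2l]; split=> // a x y [? ?] [? ?].
by split; [apply: K1l | apply: K2l].
Qed.

Lemma kernel_subspace T : linop T -> subspace (fun x => T x = 0).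
Proof.
move=> hT; split=> [|a x y hx hy]; first exact: linop0.
by rewrite hT hx hy scaler0 addr0.
Qed.

Lemma range_subspace T : linop T -> subspace (range T).
Proof.
move=> hT; split=> [|a _ _ [x <-] [y <-]]; first by exists 0; apply: linop0.
by exists (a *: x + y); rewrite hT.
Qed.

Lemma hclosedI K1 K2 : hclosed K1 -> hclosed K2 -> hclosed (fun x => K1 x /\ K2 x).
Proof.
move=> c1 c2 y hy; split; [apply: c1 | apply: c2] => e e0;
  by have [z [[? ?] ?]] := hy e e0; exists z.
Qed.

Lemma hclosed_sublevel K (phi : V -> R) M : (forall y, K y <-> phi y <= 0) ->
  (forall y z, phi y <= phi z + M * hn (y - z)) -> hclosed K.
Proof.
move=> hK hphi y hy; apply/hK/ler_addgt0Pr => e e0; pose M' := `|M| + 1.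
have M'0 : 0 < M' by rewrite /M'; have := normr_ge0 M; lra.
have [z [/hK Kz hz]] := hy _ (divr_gt0 e0 M'0).
have hMM : M * hn (y - z) <= M' * hn (y - z).
  by rewrite ler_wpM2r ?hnorm_ge0 // /M'; have := ler_norm M; lra.
rewrite ltr_pdivlMr // mulrC -(hnorm_distC hip) in hz.
by have := hphi y z; lra.
Qed.

Lemma kernel_hclosed T : bounded_op ip T -> hclosed (fun x => T x = 0).
Proof.
move=> hT; have [M [_ hM]] := bounded_op_gt0 hT; have [Tl _] := hT.
apply: (@hclosed_sublevel _ (fun x => hn (T x)) M) => [y | y z].
  split=> [->|]; first by rewrite hnorm0.
  by move=> h; apply: (hnorm_eq0 hip); apply/eqP; rewrite eq_le h hnorm_ge0.
have -> : T y = T z + T (y - z) by rewrite linopB // addrC subrK.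
by apply: le_trans (hnorm_triangle hip _ _) _; rewrite lerD2l.
Qed.

Lemma closed_range_hclosed T : closed_range ip T -> hclosed (range T).
Proof.
move=> hT y hy.
have /functional_choice [u hu] n : exists x, hn (T x - y) < halfpow R n.
  by have [_ [[x <-] hz]] := hy _ (halfpow_gt0 R n); exists x.
apply: (hT u) => e e0; have [N hN] := halfpow_small e0.
by exists N => n Nn; apply: lt_trans (hu n) (hN n Nn).
Qed.

Lemma hclosed_limit K (u : nat -> V) l :
  hclosed K -> (forall n, K (u n)) -> hconverges ip u l -> K l.
Proof.
move=> cK Ku ul; apply: cK => e e0; have [N hN] := ul e e0.
by exists (u N); split; [apply: Ku | apply: hN].
Qed.

Lemma hcauchy_halfpow (u : nat -> V) (C : R) :
  (forall m n, (m <= n)%N -> hn (u n - u m) <= C * halfpow R m) -> hcauchy ip u.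
Proof.
move=> hu e e0; pose C' := `|C| + 1.
have C'0 : 0 < C' by rewrite /C'; have := normr_ge0 C; lra.
have [N hN] := halfpow_small (divr_gt0 e0 (mulr_gt0 (ltr0n R 2) C'0)).
exists N => m n Nm Nn; apply: le_lt_trans (hnorm_dist_triangle hip _ (u N) _) _.
rewrite (hnorm_distC hip (u N)).
have hC : C * halfpow R N <= C' * halfpow R N.
  by rewrite ler_wpM2r ?ltW ?halfpow_gt0 // /C'; have := ler_norm C; lra.
have := hN N (leqnn N); rewrite ltr_pdivlMr ?mulr_gt0 //.
have := hu N m Nm; have := hu N n Nn; lra.
Qed.

Lemma hconverges_subl (u : nat -> V) l a :
  hconverges ip u l -> hconverges ip (fun n => a - u n) (a - l).
Proof.
move=> ul e e0; have [N hN] := ul e e0; exists N => n Nn.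
by rewrite opprB addrC addrA subrK (hnorm_distC hip); apply: hN.
Qed.

Lemma hconverges_uniq (u : nat -> V) l l' :
  hconverges ip u l -> hconverges ip u l' -> l = l'.
Proof.
move=> ul ul'; apply/eqP; rewrite -subr_eq0; apply/eqP/(hnorm_eq0 hip).
apply/eqP; rewrite eq_le hnorm_ge0 andbT; apply/ler_addgt0Pr => e e0.
have e20 : 0 < e / 2 by rewrite divr_gt0.
have [N1 h1] := ul _ e20; have [N2 h2] := ul' _ e20; pose n := maxn N1 N2.
have := hnorm_dist_triangle hip l (u n) l'; rewrite (hnorm_distC hip l (u n)).
by have := h1 n (leq_maxl _ _); have := h2 n (leq_maxr _ _); lra.
Qed.

Lemma hconverges_hnorm_le (u : nat -> V) l c : hconverges ip u l ->
  (forall e, 0 < e -> exists N, forall n, (N <= n)%N -> hn (u n) <= c + e) -> hn l <= c.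
Proof.
move=> ul hu; apply/ler_addgt0Pr => e e0.
have e20 : 0 < e / 2 by rewrite divr_gt0.
have [N1 h1] := ul _ e20; have [N2 h2] := hu _ e20; pose n := maxn N1 N2.
have := hnorm_triangle hip (u n) (l - u n); rewrite addrC subrK (hnorm_distC hip l).
by have := h1 n (leq_maxl _ _); have := h2 n (leq_maxr _ _); lra.
Qed.

Lemma bounded_op_hconverges T (u : nat -> V) l :
  bounded_op ip T -> hconverges ip u l -> hconverges ip (fun n => T (u n)) (T l).
Proof.
move=> hT ul e e0; have [M [M0 hM]] := bounded_op_gt0 hT; have [Tl _] := hT.
have [N hN] := ul _ (divr_gt0 e0 M0); exists N => n Nn.
rewrite -linopB //; apply: le_lt_trans (hM _) _.
by rewrite mulrC -ltr_pdivlMr //; apply: hN.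
Qed.


Definition is_orth_proj K P := forall u, K (P u) /\ orth K (u - P u).

Section OrthogonalProjection.
Variables (K : V -> Prop) (P : V -> V).
Hypotheses (hK : subspace K) (hP : is_orth_proj K P).

Lemma orth_proj_id k : K k -> P k = k.
Proof.
move=> Kk; have [KPk hPk] := hP k.
by apply: (orth_decomp_uniq hK KPk Kk hPk) => l _; rewrite subrr ip0l.
Qed.

Lemma orth_proj_linop : linop P.
Proof.
move=> a x y; have [KPx hPx] := hP x; have [KPy hPy] := hP y.
have [KP hPxy] := hP (a *: x + y).
apply: (orth_decomp_uniq hK KP _ hPxy); first by apply: hK.2.
have -> : a *: x + y - (a *: P x + P y) = a *: (x - P x) + (y - P y).
  by rewrite scalerBr opprD addrACA.
by move=> k Kk; rewrite ipDl // ipZl // hPx // hPy // mulr0 addr0.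
Qed.

Lemma hnorm2_orth_proj u : hnorm2 u = hnorm2 (P u) + hnorm2 (u - P u).
Proof.
have [KPu hPu] := hP u.
have -> : hnorm2 u = hnorm2 (P u + (u - P u)) by rewrite addrC subrK.
by rewrite hnorm2D // Re_ipC // hPu // mulr0 addr0.
Qed.

Lemma orth_proj_le u : hn (P u) <= hn u.
Proof.
by rewrite ler_hnorm // [in X in _ <= X]hnorm2_orth_proj lerDl hnorm2_ge0.
Qed.

Lemma orth_proj_compl_le u : hn (u - P u) <= hn u.
Proof.
by rewrite ler_hnorm // [in X in _ <= X]hnorm2_orth_proj lerDr hnorm2_ge0.
Qed.

End OrthogonalProjection.

End Geometry.

Section Projection.
Variables (R : realType) (V : lmodType R[i]) (ip : V -> V -> R[i]).
Hypothesis hip : inner_product_axioms ip.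
Hypothesis hcomp : forall u, hcauchy ip u -> exists l, hconverges ip u l.
Implicit Types (u v x y : V).

Local Notation hn := (hnorm ip).
Local Notation hnorm2 := (hnorm2 ip).

Variable K : V -> Prop.
Hypotheses (hK : subspace K) (cK : hclosed ip K).

Lemma min_dist_exists u : exists2 p, K p & forall k, K k -> hn (u - p) <= hn (u - k).
Proof.
pose E (r : R) := exists2 k, K k & r = hn (u - k).
have E0 : classical_sets.nonempty E by exists (hn (u - 0)), 0 => //; apply: subspace0.
have Elb : classical_sets.has_lbound E by exists 0 => _ [k _ ->]; apply: hnorm_ge0.
pose d := inf E.
have hd k : K k -> d <= hn (u - k) by move=> Kk; apply: (ge_inf Elb); exists k.
have d0 : 0 <= d by apply: lb_le_inf => // _ [k _ ->]; apply: hnorm_ge0.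
have /functional_choice [k hk] n : exists k, K k /\ hn (u - k) < d + halfpow R n ^+ 2.
  have [_ [k Kk ->] hk] := inf_adherent (exprn_gt0 2 (halfpow_gt0 R n)) (conj E0 Elb).
  by exists k.
have kcauchy m n : (m <= n)%N -> hn (k n - k m) <= Num.sqrt (8 * d + 4) * halfpow R m.
  move=> mn; have [Km hm] := hk m; have [Kn hn'] := hk n.
  set t := halfpow R m in hm *.
  have t0 : 0 <= t by apply/ltW/halfpow_gt0.
  have t2 : halfpow R n ^+ 2 <= t ^+ 2.
    by rewrite lerXn2r ?nnegrE ?(halfpow_le _ mn) // ltW // halfpow_gt0.
  have := near_min_dist_close hip hK hd d0 Kn Km
    (ltW (lt_le_trans hn' _)) (ltW hm).
  rewrite lerD2l => /(_ t2).
  rewrite hnorm_le_sqr ?mulr_ge0 ?sqrtr_ge0 // exprMn sqr_sqrtr; last lra.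
  have : t ^+ 2 <= 1 by rewrite expr_le1 ?halfpow_le1.
  have := sqr_ge0 t; nra.
have [p kp] := hcomp (hcauchy_halfpow hip kcauchy).
exists p; first exact: hclosed_limit cK (fun n => proj1 (hk n)) kp.
move=> l Kl; apply: le_trans (hd l Kl).
apply: (hconverges_hnorm_le hip (hconverges_subl hip u kp)) => e e0.
have [N hN] := halfpow_small e0; exists N => n Nn; have [_ h] := hk n.
apply/ltW/(lt_le_trans h); rewrite lerD2l; apply: le_trans (ltW (hN n Nn)).
by rewrite expr2 ger_pMl ?halfpow_gt0 ?halfpow_le1.
Qed.

Lemma orth_proj_exists : exists P, is_orth_proj ip K P.
Proof.
apply: (functional_choice (fun u p => K p /\ orth ip K (u - p))) => u.
have [p Kp hp] := min_dist_exists u.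
by exists p; split=> //; apply: min_dist_orth.
Qed.

End Projection.

Section Riesz.
Variables (R : realType) (V : lmodType R[i]) (ip : V -> V -> R[i]).
Hypothesis hip : inner_product_axioms ip.
Hypothesis hcomp : forall u, hcauchy ip u -> exists l, hconverges ip u l.
Implicit Types (u v x y : V).

Local Notation hn := (hnorm ip).
Local Notation hnorm2 := (hnorm2 ip).

Variable f : V -> R[i].
Hypothesis flin : forall a x y, f (a *: x + y) = a * f x + f y.
Hypothesis fbnd : exists M, forall x, Re (f x) <= M * hn x.

Let f0 : f 0 = 0.
Proof. by apply: (addrI (f 0)); rewrite -{1}(mul1r (f 0)) -flin scale1r !addr0. Qed.
Let fZ a x : f (a *: x) = a * f x.
Proof. by rewrite -[a *: x]addr0 flin f0 addr0. Qed.
Let fD x y : f (x + y) = f x + f y.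
Proof. by have := flin 1 x y; rewrite scale1r mul1r. Qed.
Let fB x y : f (x - y) = f x - f y.
Proof. by rewrite fD -scaleN1r fZ mulN1r. Qed.

Lemma functional_kernel_subspace : subspace (fun x => f x = 0).
Proof. by split=> [|a x y hx hy]; rewrite ?f0 // flin hx hy mulr0 addr0. Qed.

Lemma functional_kernel_hclosed : hclosed ip (fun x => f x = 0).
Proof.
have [M hM] := fbnd.
have hRe x : `|Re (f x)| <= M * hn x.
  have := hM (- x); rewrite -scaleN1r fZ mulN1r hnorm_scale //= Re_opp.
  rewrite oppr0 expr0n addr0 sqrtr_sqr normrN normr1 mul1r.
  by rewrite ler_norml => h; rewrite (hM x) andbT lerNl.
(* [Im (f x) = - Re (f ('i x))] *)
have hIm x : `|Im (f x)| <= M * hn x.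
  have := hRe ('i%C *: x); rewrite fZ Re_mul /= hnorm_scale //=.
  by rewrite expr0n add0r expr1n sqrtr1 mul1r mul0r sub0r mul1r normrN.
apply: (@hclosed_sublevel _ _ _ hip _ (fun x => `|Re (f x)| + `|Im (f x)|) (M + M)).
  move=> y; split=> [->|h]; first by rewrite normr0 addr0.
  have [Re0 Im0] : Re (f y) = 0 /\ Im (f y) = 0.
    by split; apply/eqP; rewrite -normr_le0; have := normr_ge0 (Re (f y));
      have := normr_ge0 (Im (f y)); lra.
  by apply: complex_ext; rewrite ?Re0 ?Im0.
move=> y z; have -> : f y = f z + f (y - z) by rewrite fB addrC subrK.
rewrite Re_add Im_add; have := hRe (y - z); have := hIm (y - z).
have := ler_normD (Re (f z)) (Re (f (y - z))).
have := ler_normD (Im (f z)) (Im (f (y - z))); lra.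
Qed.

Lemma riesz_representation : exists z, forall x, f x = ip x z.
Proof.
have [P hP] := orth_proj_exists hip hcomp functional_kernel_subspace
  functional_kernel_hclosed.
case: (classic (exists u, f u <> 0)) => [[u fu]|f_eq0]; last first.
  by exists 0 => x; rewrite ip0r //; apply: NNPP => h; apply: f_eq0; exists x.
have [fPu hPu] := hP u; pose w := u - P u.
have fw : f w = f u by rewrite fB fPu subr0.
have w2 : (hnorm2 w)%:C%C != 0.
  by apply: contra_notN fu => /eqP[/(hnorm2_eq0 hip) w0]; rewrite -fw w0.
(* [f w *: x - f x *: w] lies in the kernel of [f], hence is orthogonal to [w] *)
exists (((f w / (hnorm2 w)%:C%C)^*)%C *: w) => x.
have := hPu (f w *: x - f x *: w); rewrite fB !fZ mulrC subrr => /(_ erefl).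
rewrite (ipC hip) (ipBl hip) !(ipZl hip) (ip_self hip) => /eqP.
rewrite conjc_eq0 subr_eq0 => /eqP fwx.
by rewrite (ipZr hip) conjcK mulrAC fwx mulfK.
Qed.

End Riesz.

Section Adjoint.
Variables (R : realType) (V : lmodType R[i]) (ip : V -> V -> R[i]).
Hypothesis hip : inner_product_axioms ip.
Hypothesis hcomp : forall u, hcauchy ip u -> exists l, hconverges ip u l.

Local Notation hn := (hnorm ip).

Lemma adjoint_exists T :
  bounded_op ip T -> exists2 Ts, bounded_op ip Ts & is_adjoint ip T Ts.
Proof.
move=> hT; have [M [M0 hM]] := bounded_op_gt0 hT; have [Tl _] := hT.
have hCS x y : Re (ip (T x) y) <= M * hn x * hn y.
  apply: le_trans (CauchySchwarz hip _ _) _.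
  by rewrite ler_wpM2r ?hnorm_ge0 ?hM.
have /functional_choice [Ts hTs] y : exists z, forall x, ip (T x) y = ip x z.
  apply: (riesz_representation hip hcomp) => [a x x'|].
    by rewrite Tl (ipDl hip) (ipZl hip).
  by exists (M * hn y) => x; rewrite mulrAC hCS.
have Tsl : linop Ts.
  move=> a y y'; apply: (eq_ipr hip) => x.
  by rewrite -hTs (ipDr hip) (ipZr hip) !hTs -(ipZr hip) -(ipDr hip).
exists Ts => //; split=> //; exists M => y.
have h0 := hnorm_ge0 ip (Ts y); have y0 := hnorm_ge0 ip y.
have h2 : hn (Ts y) ^+ 2 <= M * hn (Ts y) * hn y by rewrite sqr_hnorm // /hnorm2 -hTs hCS.
have [->|hp] := eqVneq (hn (Ts y)) 0; first by rewrite mulr_ge0 // ltW.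
have : 0 < hn (Ts y) by rewrite lt0r hp.
nra.
Qed.

End Adjoint.

Section Baire.
Variables (R : realType) (V : lmodType R[i]) (ip : V -> V -> R[i]).
Hypothesis hip : inner_product_axioms ip.
Hypothesis hcomp : forall u, hcauchy ip u -> exists l, hconverges ip u l.
Implicit Types (K : V -> Prop) (x y z : V).

Local Notation hn := (hnorm ip).

Lemma hclosed_compl_ball K y : hclosed ip K -> ~ K y ->
  exists2 rho, 0 < rho & forall z, K z -> rho <= hn (z - y).
Proof.
move=> cK Ky; apply: NNPP => h; apply: Ky; apply: cK => e e0.
apply: NNPP => he; apply: h; exists e => // z Kz.
by rewrite leNgt; apply/negP => hz; apply: he; exists z.
Qed.

Lemma shrink_ball_avoiding K c r : hclosed ip K -> 0 < r ->
  ~ (forall y, hn (y - c) < r / 2 -> K y) ->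
  exists c' r', [/\ 0 < r', r' <= r / 2, hn (c' - c) <= r / 2 &
                    forall z, hn (z - c') <= r' -> ~ K z].
Proof.
move=> cK r0 hint; have r20 : 0 < r / 2 by rewrite divr_gt0.
have [y [hy Ky]] : exists y, hn (y - c) < r / 2 /\ ~ K y.
  apply: NNPP => h; apply: hint => y hy; apply: NNPP => Ky; apply: h; exists y.
  by split.
have [rho rho0 hrho] := hclosed_compl_ball cK Ky.
exists y, (Num.min (r / 2) (rho / 2)); split.
- by rewrite lt_min r20 divr_gt0.
- by rewrite ge_min lexx.
- exact: ltW.
- move=> z hz Kz; have := hrho z Kz; move: hz; rewrite le_min => /andP[_]; lra.
Qed.

Lemma baire_category (W : nat -> V -> Prop) :
  (forall n, hclosed ip (W n)) -> (forall y, exists n, W n y) ->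
  exists n y0 r, 0 < r /\ forall y, hn (y - y0) < r -> W n y.
Proof.
move=> cW covW; apply: NNPP => noint.
have /functional_choice [next hnext] (p : nat * (V * R)) : exists q : V * R,
    0 < p.2.2 -> [/\ 0 < q.2, q.2 <= p.2.2 / 2, hn (q.1 - p.2.1) <= p.2.2 / 2 &
                     forall z, hn (z - q.1) <= q.2 -> ~ W p.1 z].
  case: p => n [c r] /=; have [r0|r0] := ltrP 0 r; last by exists (0, 1).
  have [|c' [r' h]] := @shrink_ball_avoiding (W n) c r (cW n) r0; last by exists (c', r').
  by move=> hball; apply: noint; exists n, c, (r / 2); rewrite divr_gt0.
(* the nested balls: ball [k + 1] avoids [W k] *)
pose ball k := iteri k (fun j p => next (j, p)) (0 : V, 1 : R).
pose c k := (ball k).1; pose r k := (ball k).2.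
have r_gt0 k : 0 < r k.
  by elim: k => [|k IH]; [rewrite /r /= ltr01 | have [] := hnext (k, ball k) IH].
have step k : hn (c k.+1 - c k) <= r k / 2 /\ r k.+1 <= r k / 2.
  by have [_ ? ? _] := hnext (k, ball k) (r_gt0 k).
have r_le k : r k <= halfpow R k.
  elim: k => [|k IH]; first by rewrite halfpow0 /r /=.
  by rewrite halfpowS; have [_ ?] := step k; lra.
have dist k m : (k <= m)%N -> hn (c m - c k) <= r k - r m.
  elim: m => [|m IH]; first by rewrite leqn0 => /eqP ->; rewrite !subrr hnorm0.
  rewrite leq_eqVlt => /orP[/eqP ->|]; first by rewrite !subrr hnorm0.
  move=> /IH km; have [s1 s2] := step m.
  by apply: le_trans (hnorm_dist_triangle hip _ (c m) _) _; lra.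
have [cl hcl] : exists cl, hconverges ip c cl.
  apply/hcomp/(hcauchy_halfpow hip (C := 1)) => m n mn; rewrite mul1r.
  by have := dist m n mn; have := r_gt0 n; have := r_le m; lra.
have [n Wn] := covW cl; have [_ _ _ hmiss] := hnext (n, ball n) (r_gt0 n).
apply: (hmiss cl) Wn; rewrite (hnorm_distC hip).
apply: (hconverges_hnorm_le hip (hconverges_subl hip _ hcl)) => e e0.
exists n.+1 => m nm; rewrite (hnorm_distC hip); have := dist _ _ nm.
by have := r_gt0 m; rewrite /c /r /=; lra.
Qed.

End Baire.

Section OpenMapping.
Variables (R : realType) (V : lmodType R[i]) (ip : V -> V -> R[i]).
Hypothesis hip : inner_product_axioms ip.
Hypothesis hcomp : forall u, hcauchy ip u -> exists l, hconverges ip u l.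
Implicit Types (s v x y : V).

Local Notation hn := (hnorm ip).

Variable B : V -> V.
Hypotheses (hB : bounded_op ip B) (hBcl : closed_range ip B).

Let Bl : linop B. Proof. by case: hB. Qed.

(* Baire applied to the closed sets [W n] of points whose projection onto [R(B)]
   is approximated by images of the ball of radius [n]. *)
Lemma open_mapping_ball : exists (n : nat) (r : R), 0 < r /\
  forall s, range B s -> hn s < r ->
  forall e, 0 < e -> exists x, hn x < (2 * n)%:R /\ hn (B x - s) < e.
Proof.
have hS := range_subspace Bl.
have [P hP] := orth_proj_exists hip hcomp hS (closed_range_hclosed hBcl).
have Pl := orth_proj_linop hip hS hP.
pose W n y := forall e, 0 < e -> exists x, hn x < n%:R /\ hn (B x - P y) < e.
have cW n : hclosed ip (W n).
  move=> y hy e e0; have e20 : 0 < e / 2 by rewrite divr_gt0.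
  have [z [Wz hz]] := hy _ e20; have [x [hx1 hx2]] := Wz _ e20.
  exists x; split=> //; apply: le_lt_trans (hnorm_dist_triangle hip _ (P z) _) _.
  have : hn (P z - P y) <= hn (z - y) by rewrite -linopB // (orth_proj_le hip hP).
  lra.
have covW y : exists n, W n y.
  have [[x0 hx0] _] := hP y; exists (Num.truncn (hn x0)).+1 => e e0.
  by exists x0; rewrite truncnS_gt hx0 subrr hnorm0.
have [n [y0 [r [r0 hr]]]] := baire_category hip hcomp cW covW.
exists n, r; split=> // _ [xs <-] hs e e0; have e20 : 0 < e / 2 by rewrite divr_gt0.
have [|x1 [h11 h12]] := hr (y0 + B xs) _ _ e20; first by rewrite addrAC subrr add0r.
have [|x2 [h21 h22]] := hr y0 _ _ e20; first by rewrite subrr hnorm0.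
exists (x1 - x2); split.
  apply: le_lt_trans (hnorm_triangle hip _ _) _.
  by rewrite hnorm_opp // natrM mulr2n mulrDl mul1r; lra.
have PBxs : P (B xs) = B xs by apply: (orth_proj_id hip hS hP); exists xs.
rewrite linopD // PBxs in h12.
rewrite opprD addrA addrAC in h12; rewrite linopB // addrAC.
apply: le_lt_trans (hnorm_dist_triangle hip _ (P y0) _) _.
by rewrite (hnorm_distC hip (P y0)); lra.
Qed.

Lemma open_mapping_approx : exists2 K, 0 < K & forall s, range B s ->
  forall e, 0 < e -> exists x, hn x <= K * hn s /\ hn (B x - s) < e.
Proof.
have [n [r [r0 hr]]] := open_mapping_ball.
exists ((4 * n + 1)%:R / r); first by rewrite divr_gt0 // ltr0n addn1.
move=> s hs e e0; have [s0|sn0] := eqVneq (hn s) 0.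
  by exists 0; rewrite (hnorm_eq0 hip s0) linop0 // subrr !hnorm0 // mulr0.
have sp : 0 < hn s by rewrite lt0r sn0 hnorm_ge0.
(* rescale [s] into the ball of radius [r] *)
pose c := r / (2 * hn s); have c0 : 0 < c by rewrite divr_gt0 // mulr_gt0.
have [|x' [hx1 hx2]] := hr (c%:C%C *: s) (subspaceZ (range_subspace Bl) _ hs) _ _
  (mulr_gt0 c0 e0).
  rewrite hnorm_scale_real // gtr0_norm //.
  have -> : c * hn s = r / 2 by rewrite /c; field; rewrite sn0.
  lra.
exists ((c^-1)%:C%C *: x'); split.
  rewrite hnorm_scale_real // gtr0_norm ?invr_gt0 // invf_div.
  have -> : 2 * hn s / r * hn x' = hn s / r * (2 * hn x') by ring.
  have -> : (4 * n + 1)%:R / r * hn s = hn s / r * (4 * n + 1)%:R by ring.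
  rewrite ler_pM2l ?divr_gt0 // natrD natrM.
  by rewrite natrM in hx1; lra.
have -> : s = (c^-1)%:C%C *: (c%:C%C *: s).
  by rewrite scalerA -rmorphM /= mulVf ?gt_eqF // scale1r.
rewrite linopZ //.
rewrite -scalerBr hnorm_scale_real // gtr0_norm ?invr_gt0 //.
by rewrite mulrC -ltr_pdivlMr ?invr_gt0 // invrK mulrC.
Qed.

Lemma open_mapping_halving : exists K (g : V -> V), 0 < K /\ forall v, range B v ->
  hn (g v) <= K * hn v /\ hn (v - B (g v)) <= hn v / 2.
Proof.
have [K K0 hK] := open_mapping_approx.
suff /functional_choice[g hg] v : exists x, range B v ->
    hn x <= K * hn v /\ hn (v - B x) <= hn v / 2.
  by exists K, g; split=> // v /hg.
case: (classic (range B v)) => [hv|]; last by exists 0.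
have [v0|vn0] := eqVneq (hn v) 0.
  by exists 0 => _; rewrite (hnorm_eq0 hip v0) linop0 // subrr hnorm0 // mulr0 mul0r.
have [|x [hx1 hx2]] := hK v hv (hn v / 2).
  by rewrite divr_gt0 // lt0r vn0 hnorm_ge0.
by exists x => _; rewrite hnorm_distC // hx1 ltW.
Qed.

(* Successive approximation: [x_(k+1) = x_k + g (s - B x_k)] with the residual
   halving at each step. *)
Lemma open_mapping : exists2 C, 0 < C & forall s, range B s ->
  exists2 x, B x = s & hn x <= C * hn s.
Proof.
have [K [g [K0 hg]]] := open_mapping_halving.
exists (2 * K) => [|s hs]; first by rewrite mulr_gt0.
pose res k := iter k (fun v => v - B (g v)) s.
pose X k := \sum_(j < k) g (res j).
have res_range k : range B (res k).
  elim: k => //= k IH; apply: (subspaceB (range_subspace Bl)) => //.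
  by exists (g (res k)).
have res_le k : hn (res k) <= hn s * halfpow R k.
  elim: k => [|k IH]; first by rewrite halfpow0 mulr1.
  by rewrite halfpowS /=; have [_ h] := hg _ (res_range k); lra.
have g_le k : hn (g (res k)) <= K * hn s * halfpow R k.
  have [h _] := hg _ (res_range k); rewrite -mulrA; apply: le_trans h _.
  by rewrite ler_pM2l.
have BX k : B (X k) = s - res k.
  elim: k => [|k IH]; first by rewrite /X big_ord0 linop0 // subrr.
  by rewrite /X big_ord_recr /= (linopD Bl) -/(X k) IH opprB addrA addrAC.
have X_dist m n : (m <= n)%N ->
    hn (X n - X m) <= 2 * K * hn s * (halfpow R m - halfpow R n).
  elim: n => [|n IH]; first by rewrite leqn0 => /eqP ->; rewrite !subrr hnorm0 // mulr0.
  rewrite leq_eqVlt => /orP[/eqP ->|]; first by rewrite !subrr hnorm0 // mulr0.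
  move=> /IH mn; rewrite /X big_ord_recr /= -/(X n) addrAC.
  apply: le_trans (hnorm_triangle hip _ _) _; rewrite halfpowS.
  by have := g_le n; lra.
have KS0 : 0 <= 2 * K * hn s by rewrite !mulr_ge0 ?hnorm_ge0 // ltW.
have X_cauchy m n : (m <= n)%N -> hn (X n - X m) <= 2 * K * hn s * halfpow R m.
  move=> mn; apply: le_trans (X_dist m n mn) _.
  by rewrite ler_wpM2l // lerBlDr lerDl ltW ?halfpow_gt0.
have [x Xx] := hcomp (hcauchy_halfpow hip X_cauchy).
exists x.
  apply: (hconverges_uniq hip (bounded_op_hconverges hB Xx)) => e e0.
  have [N hN] := halfpow_small (divr_gt0 e0 (ltr_pwDr ltr01 (hnorm_ge0 ip s))).
  exists N => n Nn; rewrite BX addrAC subrr add0r hnorm_opp //.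
  apply: le_lt_trans (res_le n) _; move: (hN n Nn).
  rewrite ltr_pdivlMr ?ltr_pwDr ?hnorm_ge0 //.
  by have := halfpow_gt0 R n; have := hnorm_ge0 ip s; nra.
apply: (hconverges_hnorm_le hip Xx) => e e0; exists 0%N => n _.
have := X_dist 0 n (leq0n n); rewrite /X big_ord0 subr0 halfpow0.
by have := mulr_ge0 KS0 (ltW (halfpow_gt0 R n)); lra.
Qed.

Lemma bounded_lift Q : bounded_op ip Q -> (forall y, range B (Q y)) ->
  exists G, bounded_op ip G /\ forall y, B (G y) = Q y.
Proof.
move=> hQ QB; have [C C0 hC] := open_mapping; have [MQ [MQ0 hMQ]] := bounded_op_gt0 hQ.
have [Ql _] := hQ.
have /functional_choice [g hg] y : exists x, B x = Q y /\ hn x <= C * hn (Q y).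
  by have [x ? ?] := hC _ (QB y); exists x.
have hN := kernel_subspace Bl.
have [P hP] := orth_proj_exists hip hcomp hN (kernel_hclosed hip hB).
(* subtracting the kernel component makes the choice of preimage linear *)
pose G y := g y - P (g y).
have BG y : B (G y) = Q y by rewrite linopB // (proj1 (hP _)) subr0; case: (hg y).
exists G; split=> //; split.
  move=> a y1 y2; pose w := g (a *: y1 + y2) - (a *: g y1 + g y2).
  have Bw : B w = 0.
    by rewrite /w linopB // Bl !(proj1 (hg _)) Ql subrr.
  rewrite /G; have -> : g (a *: y1 + y2) = (a *: g y1 + g y2) + w.
    by rewrite /w [RHS]addrC subrK.
  rewrite (linopD (orth_proj_linop hip hN hP)) (orth_proj_id hip hN hP Bw).
  rewrite (orth_proj_linop hip hN hP) opprD addrACA subrr addr0.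
  by rewrite opprD addrACA -scalerBr.
exists (C * MQ) => y; rewrite /G; apply: le_trans (orth_proj_compl_le hip hP _) _.
have [_ h] := hg y; apply: le_trans h _.
by rewrite -mulrA ler_pM2l.
Qed.

End OpenMapping.

Section PositiveOperator.
Variables (R : realType) (V : lmodType R[i]) (ip : V -> V -> R[i]).
Hypothesis hip : inner_product_axioms ip.
Implicit Types (S : V -> Prop) (x y z : V).

Variable A : V -> V.
Hypothesis hA : positive_op ip A.

Let Al : linop A. Proof. by case: hA => [[]]. Qed.

(* [Im <A x, x> = 0] for all [x]; polarize with [x + y] and [x + 'i y]. *)
Lemma positive_op_selfadj x y : ip (A x) y = ip x (A y).
Proof.
have Im0 x' : Im (ip (A x') x') = 0 by case: hA => _ /(_ x') /ger0_Im.
have ImC x' y' : Im (ip (A x') y') = - Im (ip (A y') x').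
  have := Im0 (x' + y').
  by rewrite linopD // !(ipDl hip) !(ipDr hip) !Im_add !Im0; lra.
have := ImC x ('i%C *: y); rewrite linopZ // (ipZl hip) (ipZr hip) !Im_mul /= => h.
apply: complex_ext; first by rewrite (Re_ipC hip x); lra.
by rewrite (Im_ipC hip x); apply: ImC.
Qed.

Definition Anorm2 x := Re (ip (A x) x).

Lemma Anorm2_ge0 x : 0 <= Anorm2 x.
Proof. by case: hA => _ /(_ x) /ge0_Re. Qed.

Lemma Anorm2D x y : Anorm2 (x + y) = Anorm2 x + 2 * Re (ip (A x) y) + Anorm2 y.
Proof.
have h : Re (ip (A y) x) = Re (ip (A x) y).
  by rewrite positive_op_selfadj (Re_ipC hip).
by rewrite /Anorm2 linopD // (ipDl hip) !(ipDr hip) !Re_add h; lra.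
Qed.

Lemma Anorm2Z_real (t : R) x : Anorm2 (t%:C%C *: x) = t ^+ 2 * Anorm2 x.
Proof.
by rewrite /Anorm2 linopZ // (ipZl hip) (ipZr hip) conjc_real mulrA !Re_mul /=; ring.
Qed.

Lemma ler_Anorm x y : (Anorm ip A x <= Anorm ip A y) = (Anorm2 x <= Anorm2 y).
Proof. by rewrite /Anorm ler_sqrt // Anorm2_ge0. Qed.

Lemma Anorm2_eq0 x : Anorm2 x = 0 -> A x = 0.
Proof.
move=> x0; apply: (eq_Re_ipl hip) => z.
rewrite (ip0l hip) positive_op_selfadj (Re_ipC hip).
apply: (@affine_ge0_slope_eq0 _ _ (Anorm2 z)) => t.
have := Anorm2_ge0 (z + (- t)%:C%C *: x).
by rewrite Anorm2D Anorm2Z_real x0 mulr0 addr0 (Re_ipZr_real hip); lra.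
Qed.

Section ANormMinimization.
Variable S : V -> Prop.
Hypothesis hS : subspace S.

Lemma Anorm_min_orth y p : S p ->
  (forall s, S s -> Anorm ip A (y - p) <= Anorm ip A (y - s)) ->
  forall s, S s -> ip (A (y - p)) s = 0.
Proof.
move=> Sp hmin; apply: (orth_Re hip hS) => s Ss.
apply: (@quadratic_ge0_lin_eq0 _ _ (Anorm2 s)); first exact: Anorm2_ge0.
move=> t; have := hmin _ (subspaceD hS Sp (subspaceZ hS (t%:C%C) Ss)).
have -> : y - (p + t%:C%C *: s) = (y - p) + (- t)%:C%C *: s.
  by rewrite opprD addrA rmorphN scaleNr.
rewrite ler_Anorm [in X in _ <= X]Anorm2D Anorm2Z_real (Re_ipZr_real hip) sqrrN.
lra.
Qed.

Lemma A_orth_Anorm_min y p : S p -> (forall s, S s -> ip (A (y - p)) s = 0) ->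
  forall s, S s -> Anorm ip A (y - p) <= Anorm ip A (y - s).
Proof.
move=> Sp horth s Ss; rewrite ler_Anorm.
have -> : y - s = (y - p) + (p - s) by rewrite addrA subrK.
have Sps : S (p - s) by apply: subspaceB.
rewrite [in X in _ <= X]Anorm2D horth //.
by rewrite /= mulr0 addr0 lerDl Anorm2_ge0.
Qed.

End ANormMinimization.

(* For an idempotent [Q], [A Q = Q^* A] says exactly that [A (1 - Q)] is
   orthogonal to [R(Q)]. *)
Lemma A_orth_adjoint S Q Qs : (forall z, S (Q z)) ->
  (forall z s, S s -> ip (A (z - Q z)) s = 0) -> is_adjoint ip Q Qs ->
  forall x, A (Q x) = Qs (A x).
Proof.
move=> SQ horth adj x; apply: (eq_Re_ipl hip) => z.
rewrite (Re_ipC hip (Qs _)) -adj (Re_ipC hip (Q z)).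
have ez : ip (A (Q x)) z = ip (A (Q x)) (Q z) + ip (A (Q x)) (z - Q z).
  by rewrite -(ipDr hip) addrC subrK.
have ex : ip (A x) (Q z) = ip (A (Q x)) (Q z) + ip (A (x - Q x)) (Q z).
  by rewrite -(ipDl hip) -linopD // addrC subrK.
have e1 : Re (ip (A (Q x)) (z - Q z)) = 0.
  by rewrite positive_op_selfadj (Re_ipC hip) horth.
by rewrite ez ex !Re_add e1 horth // addr0.
Qed.

Lemma adjoint_A_orth Q Qs : linop Q -> (forall x, Q (Q x) = Q x) ->
  is_adjoint ip Q Qs -> (forall x, A (Q x) = Qs (A x)) ->
  forall z w, ip (A (z - Q z)) (Q w) = 0.
Proof.
move=> Ql QQ adj AQ z w.
by rewrite positive_op_selfadj AQ -adj linopB // QQ subrr (ip0l hip).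
Qed.

End PositiveOperator.

Section AInverse.
Variables (R : realType) (V : lmodType R[i]) (ip : V -> V -> R[i]).
Hypothesis hip : inner_product_axioms ip.
Hypothesis hcomp : forall u, hcauchy ip u -> exists l, hconverges ip u l.

Variables A B : V -> V.
Hypotheses (hA : positive_op ip A) (hB : bounded_op ip B) (hBcl : closed_range ip B).

Let Al : linop A. Proof. by case: hA => [[]]. Qed.
Let Bl : linop B. Proof. by case: hB. Qed.

Lemma compatible_of_A_orth_proj S Q : bounded_op ip Q -> (forall z, S (Q z)) ->
  (forall s, S s -> Q s = s) -> (forall z s, S s -> ip (A (z - Q z)) s = 0) ->
  compatible ip A S.
Proof.
move=> hQ SQ Qfix horth; have [Qs hQs adj] := adjoint_exists hip hcomp hQ.
exists Q; split=> //; split=> [x|]; first exact: Qfix.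
split=> [y|]; first by split=> [[x <-] //|/Qfix <-]; exists y.
by exists Qs; split=> //; split=> //; apply: (A_orth_adjoint hip hA SQ horth adj).
Qed.

Lemma A_inverse_compatible G : is_A_inverse ip A B G -> compatible ip A (range B).
Proof.
case=> hG hmin; have hS := range_subspace Bl.
have orthA y s : range B s -> ip (A (y - B (G y))) s = 0.
  apply: (Anorm_min_orth hip hA hS) => [|_ [x <-]]; [by exists (G y) | exact: hmin].
pose N x := range B x /\ A x = 0.
have hN : subspace N := subspaceI hS (kernel_subspace Al).
have [P hP] := orth_proj_exists hip hcomp hN
  (hclosedI (closed_range_hclosed hBcl) (kernel_hclosed hip hA.1)).
have Pl := orth_proj_linop hip hN hP.
(* correct [B G] by the component of the residual in [R(B) ∩ N(A)] *)
pose Q y := B (G y) + P (y - B (G y)).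
apply: (@compatible_of_A_orth_proj _ Q).
- exact (bounded_op_correction hip (bounded_op_comp hB hG) Pl (orth_proj_le hip hP)).
- by move=> y; apply: (subspaceD hS); [exists (G y) | case: (hP (y - B (G y))) => -[]].
- move=> s Ss; pose d := s - B (G s).
  have Sd : range B d by apply: (subspaceB hS) => //; exists (G s).
  have Ad : A d = 0 by apply: (Anorm2_eq0 hip hA); rewrite /Anorm2 orthA.
  by rewrite /Q -/d (orth_proj_id hip hN hP (conj Sd Ad)) /d addrC subrK.
- move=> z s Ss; have [[_ APz] _] := hP (z - B (G z)).
  by rewrite /Q opprD addrA (linopB Al) APz subr0; apply: orthA.
Qed.

Lemma compatible_A_inverse : compatible ip A (range B) -> exists G, is_A_inverse ip A B G.
Proof.
case=> Q [hQ [QQ [QS [Qs [hQs [adj AQ]]]]]].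
have QB y : range B (Q y) by apply/QS; exists y.
have horth z s : range B s -> ip (A (z - Q z)) s = 0.
  by move=> /QS[w <-]; apply: (adjoint_A_orth hip hA hQ.1 QQ adj AQ).
have [G [hG BG]] := bounded_lift hip hcomp hB hBcl hQ QB.
exists G; split=> // y x; rewrite BG.
by apply: (A_orth_Anorm_min hip hA (range_subspace Bl) (QB y) (horth y)); exists x.
Qed.

End AInverse.

Theorem mainTheorem13 (R : realType) (V : lmodType R[i]) (ip : V -> V -> R[i])
  (hH : is_hilbert ip) (hsep : hseparable ip)
  (A B : V -> V) (hA : positive_op ip A) (hB : bounded_op ip B)
  (hBcl : closed_range ip B) :
  (exists G : V -> V, is_A_inverse ip A B G) <-> compatible ip A (range B).
Proof.
case: hH => hip hcomp; split=> [[G hG]|].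
- exact: (A_inverse_compatible hip hcomp hA hB hBcl hG).
- exact: (compatible_A_inverse hip hcomp hA hB hBcl).
Qed.
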